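(* Let $n\ge7$ and $G\cong K_3\cup K_{1,n-4}$ (a graph on $n$ vertices). Then $q(\overline{G})=2$, and $\overline G$ has a matrix realization in $S(\overline G)$ with exactly two distinct eigenvalues that has the Strong Spectral Property.
   Context: $\overline G$ denotes the complement of $G$; $K_{1,n-4}$ is a star and $\cup$ is disjoint union. For a graph $H$ on $n$ vertices, $S(H)$ is the set of real symmetric matrices $A$ with $a_{ij}\ne0$ ($i\ne j$) iff $ij\in E(H)$, diagonal unrestricted, and $q(H)$ is the minimum number of distinct eigenvalues over $S(H)$. A symmetric $A$ has the Strong Spectral Property if the only symmetric $X$ with $A\circ X=O$, $I\circ X=O$, $AX=XA$ is $X=O$ ($\circ$ the entrywise product). *)

From HB Require Import structures.
From mathcomp Require Import all_boot all_order all_algebra.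
From mathcomp Require Import perm Rstruct.
From Stdlib Require Import Rdefinitions.
Set Implicit Arguments. Unset Strict Implicit. Unset Printing Implicit Defensive.
Import Order.TTheory GRing.Theory Num.Theory.
Local Open Scope ring_scope.

Definition simple_graph n (e : rel 'I_n) : Prop :=
  (forall i j, e i j = e j i) /\ (forall i, e i i = false).

Definition compl_graph n (e : rel 'I_n) : rel 'I_n :=
  fun i j => (i != j) && ~~ e i j.

Definition graph_iso n (e e' : rel 'I_n) : Prop :=
  exists f : {perm 'I_n}, forall i j, e (f i) (f j) = e' i j.

(* The model graph K_3 \cup K_{1,n-4} on 'I_n: {0,1,2} is a triangle,
   vertex 3 is the centre of a star whose leaves are 4, ..., n-1. *)
Definition K3_star n : rel 'I_n :=
  fun i j => let a := nat_of_ord i in let b := nat_of_ord j in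
    (a != b) &&
    [|| ltn a 3 && ltn b 3, (a == 3%N) && leq 4 b | (b == 3%N) && leq 4 a].

Definition S_graph n (H : rel 'I_n) (A : 'M[R]_n) : Prop :=
  A^T = A /\ forall i j, i != j -> (A i j != 0 <-> H i j).

Definition num_distinct_eig n (A : 'M[R]_n) (k : nat) : Prop :=
  exists s : seq R, [/\ uniq s, (forall a, eigenvalue A a <-> a \in s)
                      & size s = k].

Definition q_eq n (H : rel 'I_n) (k : nat) : Prop :=
  (exists A, S_graph H A /\ num_distinct_eig A k) /\
  (forall A m, S_graph H A -> num_distinct_eig A m -> leq k m).

Definition SSP n (A : 'M[R]_n) : Prop :=
  forall X : 'M[R]_n, X^T = X ->
    (forall i j, A i j * X i j = 0) ->
    (forall i, X i i = 0) ->
    A *m X = X *m A -> X = 0.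

From HB Require Import structures.
From mathcomp Require Import all_boot all_order all_algebra.
From mathcomp Require Import perm Rstruct.
From mathcomp Require Import complex spectral.
From mathcomp Require Import ring lra zify.
From Stdlib Require Import Rdefinitions.
Set Implicit Arguments. Unset Strict Implicit. Unset Printing Implicit Defensive.
Import Order.TTheory GRing.Theory Num.Theory.
Local Open Scope ring_scope.

(* Write G = K_3 \cup K_{1,n-4} with triangle {0,1,2}, centre 3 and leaves
   4, ..., n-1.  The realization is the Gram matrix B = U U^T of the rows of an
   n x 3 matrix U with orthonormal columns, chosen so that two rows are
   orthogonal exactly when the vertices are adjacent in G: then B lies in
   S(complement of G) and is an orthogonal projection, with eigenvalues 0 and 1.
   Conversely a real symmetric matrix with a nonzero off-diagonal entry is not
   scalar, so it has at least two eigenvalues.  For the SSP, a symmetric X with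
   zero diagonal and B o X = 0 is supported on the edges of G; comparing the
   (t, l) entries of BX = XB for a triangle vertex t and a leaf l gives
   B_t3 X_3l = sum_k X_tk B_kl, and the leaves 4 and 5 already force the
   triangle entries of X to vanish, hence every X_3l as well.  An arbitrary G
   isomorphic to K_3 \cup K_{1,n-4} is handled by permutation similarity. *)

Local Notation toC := (real_complex R).

Lemma eigenvalue_diag_similar (F : fieldType) n (P : 'M[F]_n) (d : 'rV[F]_n) j :
  P \in unitmx -> eigenvalue (invmx P *m diag_mx d *m P) (d 0 j).
Proof.
move=> P_unit; apply/eigenvalueP; exists (row j P).
  by rewrite -row_mul !mulmxA mulmxV // mul1mx mul_diag_mx; apply/rowP => k; rewrite !mxE.
apply/negP => /eqP rowP0.
have : (delta_mx 0 j : 'rV_n) *m P *m invmx P = 0 by rewrite -rowE rowP0 mul0mx.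
by rewrite mulmxK // => /rowP/(_ j); rewrite !mxE !eqxx => /eqP; rewrite oner_eq0.
Qed.

Lemma realsym_diagonalization n (A : 'M[R]_n) : A^T = A ->
  exists (d : 'I_n -> R) (P : 'M[R[i]]_n), [/\ P \in unitmx,
    map_mx toC A = invmx P *m diag_mx (\row_j toC (d j)) *m P
    & forall j, eigenvalue A (d j)].
Proof.
move=> symA; set AC := map_mx toC A.
have AC_real : AC \is a realmx.
  by apply/mxOverP => i j; rewrite mxE; apply/Creal_ReP; rewrite -complexRe.
have AC_sym : AC \is symmetricmx.
  apply/is_hermitianmxP; rewrite expr0 scale1r.
  by rewrite /AC map_trmx symA map_mx_id.
have AC_herm := realsym_hermsym AC_sym AC_real.
have /hermitian_normalmx /orthomx_spectralP := AC_herm.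
move: (spectral_unit AC) (hermitian_spectral_diag_real AC_herm).
move: (spectralmx AC) (spectral_diag AC) => P D P_unit /mxOverP D_real AC_eq.
have DE j : toC (complex.Re (D 0 j)) = D 0 j.
  by rewrite complexRe; apply/Creal_ReP/D_real.
exists (fun j => complex.Re (D 0 j)), P; split=> [//||j].
  by rewrite AC_eq; congr (_ *m diag_mx _ *m _); apply/rowP => j; rewrite mxE DE.
have := eigenvalue_diag_similar D j P_unit.
by rewrite -AC_eq -(DE j) eigenvalue_map.
Qed.

Lemma realsym_eigenvalue_scalar n (A : 'M[R]_n) a : A^T = A ->
  (forall b, eigenvalue A b -> b = a) -> A = a%:M.
Proof.
move=> symA eigA; have [d [P [P_unit AE eig_d]]] := realsym_diagonalization symA.
apply: (@map_mx_inj _ _ toC); rewrite AE map_scalar_mx.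
have -> : diag_mx (\row_j toC (d j)) = (toC a)%:M.
  by apply/matrixP => k l; rewrite !mxE (eigA _ (eig_d k)).
by rewrite mul_mx_scalar -scalemxAl mulVmx // scalemx1.
Qed.

Lemma num_distinct_eig_gt1 n (A : 'M[R]_n) i j k : A^T = A -> i != j ->
  A i j != 0 -> num_distinct_eig A k -> (1 < k)%nat.
Proof.
move=> symA neq_ij Aij_neq0 [s [_ eigAs <-]].
have [d [_ [_ _ eig_d]]] := realsym_diagonalization symA.
case: s eigAs => [|a [|b s]] eigAs //; first by have /eigAs := eig_d i.
have /(realsym_eigenvalue_scalar symA) Aa : forall b, eigenvalue A b -> b = a.
  by move=> b /eigAs; rewrite inE => /eqP.
by move: Aij_neq0; rewrite Aa mxE (negPf neq_ij) eqxx.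
Qed.

Lemma idempotent_num_distinct_eig n (P : 'M[R]_n) i :
  P *m P = P -> P i i != 0 -> P i i != 1 -> num_distinct_eig P 2.
Proof.
move=> PP Pii_neq0 Pii_neq1; exists [:: 0; 1]; split=> //=.
  by rewrite inE eq_sym oner_eq0.
move=> a; split.
  case/eigenvalueP => v vP v_neq0.
  have : (a * a - a) *: v = 0.
    have vPP_sq : v *m P *m P = (a * a) *: v by rewrite vP -scalemxAl vP scalerA.
    have vPP : v *m P *m P = a *: v by rewrite -mulmxA PP vP.
    by rewrite scalerBl -vPP_sq -vPP subrr.
  move/eqP; rewrite scaler_eq0 (negPf v_neq0) orbF.
  have -> : a * a - a = a * (a - 1) by rewrite mulrBr mulr1.
  by rewrite mulf_eq0 subr_eq0 !inE.
rewrite !inE => /orP[] /eqP ->; apply/eigenvalueP.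
  exists (row i (1%:M - P)).
    by rewrite -row_mul mulmxBl mul1mx PP subrr scale0r row0.
  apply/negP => /eqP/rowP/(_ i); rewrite !mxE eqxx /= => /eqP.
  by rewrite subr_eq0 eq_sym (negPf Pii_neq1).
exists (row i P); first by rewrite -row_mul PP scale1r.
by apply/negP => /eqP/rowP/(_ i); rewrite !mxE => /eqP; rewrite (negPf Pii_neq0).
Qed.

Definition permsim (K : Type) n (g : {perm 'I_n}) (B : 'M[K]_n) : 'M[K]_n :=
  \matrix_(i, j) B (g i) (g j).

Lemma permsimM (K : pzSemiRingType) n (g : {perm 'I_n}) (B C : 'M[K]_n) :
  permsim g (B *m C) = permsim g B *m permsim g C.
Proof.
apply/matrixP => i j; rewrite !mxE (reindex_inj (@perm_inj _ g)) /=.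
by apply: eq_bigr => k _; rewrite !mxE.
Qed.

Lemma permsim_tr (K : Type) n (g : {perm 'I_n}) (B : 'M[K]_n) :
  (permsim g B)^T = permsim g B^T.
Proof. by apply/matrixP => i j; rewrite !mxE. Qed.

Lemma permsimK (K : Type) n (g : {perm 'I_n}) :
  cancel (@permsim K n g) (permsim (g^-1)%g).
Proof. by move=> B; apply/matrixP => i j; rewrite !mxE !permKV. Qed.

Lemma SSP_permsim n (g : {perm 'I_n}) (B : 'M[R]_n) : SSP B -> SSP (permsim g B).
Proof.
move=> SSP_B X symX BX0 X_diag0 commX.
apply: (can_inj (permsimK (g^-1)%g)).
have -> : permsim (g^-1)%g (0 : 'M[R]_n) = 0 by apply/matrixP => i j; rewrite !mxE.
apply: SSP_B.
- by rewrite permsim_tr symX.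
- by move=> i j; have := BX0 ((g^-1)%g i) ((g^-1)%g j); rewrite !mxE !permKV.
- by move=> i; rewrite mxE X_diag0.
- by rewrite -(permsimK g B) -!permsimM commX.
Qed.

Lemma S_graph_permsim n (H H' : rel 'I_n) (g : {perm 'I_n}) (B : 'M[R]_n) :
  (forall i j, H' i j = H (g i) (g j)) -> S_graph H B -> S_graph H' (permsim g B).
Proof.
move=> H'E [symB patB]; split; first by rewrite permsim_tr symB.
by move=> i j neq_ij; rewrite mxE H'E; apply: patB; rewrite (inj_eq perm_inj).
Qed.

Definition dot3 (x y : seq R) := x`_0 * y`_0 + x`_1 * y`_1 + x`_2 * y`_2.

(* Row i of U.  The centre row is orthogonal to the leaf rows because their
   coordinates sum to 0; the leaves 6, ..., n-1 share one row, scaled by w so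
   that the columns of U are unit vectors. *)
Definition K3_star_row (w : R) (i : nat) : seq R :=
  match i with
  | 0 => [:: 1/2; 0; 0]
  | 1 => [:: 0; 1/2; 0]
  | 2 => [:: 0; 0; 1/2]
  | 3 => [:: 1/2; 1/2; 1/2]
  | 4 => [:: 1/14; -4/14; 3/14]
  | 5 => [:: 4/14; -9/14; 5/14]
  | _ => [:: 9 * w; - w; -8 * w]
  end.

Lemma K3_star_row_dot_eq0 w i j : 0 < w -> i != j ->
  (dot3 (K3_star_row w i) (K3_star_row w j) == 0) =
  [|| (i < 3) && (j < 3), (i == 3 :> nat) && (4 <= j) | (j == 3 :> nat) && (4 <= i)]%nat.
Proof.
move=> w_gt0.
case: i => [|[|[|[|[|[|i]]]]]]; case: j => [|[|[|[|[|[|j]]]]]] //= neq_ij;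
(* the right-hand side is a closed nat comparison, computed to true if it is *)
rewrite /dot3 /= -?[X in _ = X]/true;
  first [ by apply/eqP; lra | by apply/negbTE/eqP => ?; nra ].
Qed.

(* K3_star is written with ring numerals on nat, which lia does not read. *)
Lemma K3_starE n (i j : 'I_n) : K3_star i j = (i != j :> nat) &&
  [|| (i < 3) && (j < 3), (i == 3 :> nat) && (4 <= j) | (j == 3 :> nat) && (4 <= i)]%nat.
Proof. by []. Qed.

Lemma sum_over_support (V : nmodType) N (F : 'I_N -> V) (s : seq 'I_N) :
  uniq s -> (forall k, k \notin s -> F k = 0) -> \sum_k F k = \sum_(k <- s) F k.
Proof.
move=> uniq_s F0; rewrite [RHS]big_uniq // [RHS]big_mkcond.
by apply: eq_bigr => k _; case: ifPn => // /F0.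
Qed.

Section Realization.
Variables (m : nat) (w : R).
Hypotheses (w_gt0 : 0 < w) (w_norm : m.+1%:R * w ^+ 2 = 1 / 196).
Local Notation n := m.+3.+4.

Definition K3_star_factor : 'M[R]_(n, 3) := \matrix_(i, a) (K3_star_row w i)`_a.
Definition K3_star_proj := K3_star_factor *m K3_star_factor^T.

Lemma K3_star_projE i j :
  K3_star_proj i j = dot3 (K3_star_row w i) (K3_star_row w j).
Proof. by rewrite !mxE /dot3 !big_ord_recr big_ord0 /= add0r !mxE. Qed.

Lemma K3_star_proj_S_graph : S_graph (compl_graph (@K3_star n)) K3_star_proj.
Proof.
split=> [|i j neq_ij]; first by rewrite trmx_mul trmxK.
rewrite K3_star_projE /compl_graph K3_starE neq_ij /=.
by rewrite (K3_star_row_dot_eq0 w_gt0 neq_ij).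
Qed.

Lemma K3_star_factor_orthonormal : K3_star_factor^T *m K3_star_factor = 1%:M.
Proof.
apply/matrixP => a b; rewrite !mxE.
pose F i := (K3_star_row w i)`_a * (K3_star_row w i)`_b.
rewrite (eq_bigr (fun i : 'I_n => F i)) => [|i _]; last by rewrite !mxE.
rewrite -(big_mkord xpredT F) (big_cat_nat _ (n := 6)) //.
rewrite (eq_big_nat _ _ (F1 := F) (F2 := fun=> F 6) (m := 6)) => [|[|[|[|[|[|[|i]]]]]] //].
rewrite /= sumr_const_nat -[(n - 6)%nat]/(m.+1) -(mulr_natl _ m.+1).
rewrite /index_iota /= !big_cons big_nil {}/F.
have := w_norm; rewrite expr2; set k := m.+1%:R => k_w2.
by case: a b => [[|[|[|//]]] ?] [[|[|[|//]]] ?] /=; nra.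
Qed.

Lemma K3_star_proj_idem : K3_star_proj *m K3_star_proj = K3_star_proj.
Proof.
rewrite /K3_star_proj mulmxA -(mulmxA K3_star_factor).
by rewrite K3_star_factor_orthonormal mulmx1.
Qed.

Lemma K3_star_proj00 : K3_star_proj ord0 ord0 = 1 / 4.
Proof. rewrite K3_star_projE /dot3 /=; lra. Qed.

Let o0 : 'I_n := @Ordinal n 0 isT.
Let o1 : 'I_n := @Ordinal n 1 isT.
Let o2 : 'I_n := @Ordinal n 2 isT.
Let o3 : 'I_n := @Ordinal n 3 isT.
Let o4 : 'I_n := @Ordinal n 4 isT.
Let o5 : 'I_n := @Ordinal n 5 isT.

Section SSP.
Variable X : 'M[R]_n.
Hypotheses (symX : X^T = X) (BX0 : forall i j, K3_star_proj i j * X i j = 0).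
Hypotheses (X_diag0 : forall i, X i i = 0).
Hypothesis commX : K3_star_proj *m X = X *m K3_star_proj.

Lemma SSP_witness_sym i j : X i j = X j i.
Proof. by rewrite -[in LHS]symX mxE. Qed.

Lemma SSP_witness_supp i j : ~~ K3_star i j -> X i j = 0.
Proof.
move=> nK; have [<-|neq_ij] := eqVneq i j; first exact: X_diag0.
have [_ patB] := K3_star_proj_S_graph.
have Bij_neq0 : K3_star_proj i j != 0.
  by apply/(patB _ _ neq_ij); rewrite /compl_graph neq_ij.
by move/eqP: (BX0 i j); rewrite mulf_eq0 (negPf Bij_neq0) => /eqP.
Qed.

Lemma SSP_witness_leaf_eq (t l : 'I_n) : (t < 3)%nat -> (4 <= l)%nat ->
  K3_star_proj t o3 * X o3 l = X t o0 * K3_star_proj o0 l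
    + X t o1 * K3_star_proj o1 l + X t o2 * K3_star_proj o2 l.
Proof.
move=> t_lt3 l_ge4.
(* Column l of X is supported at the centre, row t on the triangle. *)
have -> : K3_star_proj t o3 * X o3 l = (K3_star_proj *m X) t l.
  rewrite [RHS]mxE (sum_over_support _ (s := [:: o3])) ?big_seq1 //.
  move=> k; rewrite inE -(inj_eq val_inj) /= => k_neq3.
  by rewrite SSP_witness_supp ?mulr0 // K3_starE; lia.
rewrite commX [LHS]mxE (sum_over_support _ (s := [:: o0; o1; o2])) //.
  by rewrite !big_cons big_nil addr0 addrA.
move=> k; rewrite !inE -!(inj_eq val_inj) /= => k_out.
by rewrite SSP_witness_supp ?mul0r // K3_starE; lia.
Qed.

Lemma SSP_witness_triangle_eq0 : [/\ X o0 o1 = 0, X o0 o2 = 0 & X o1 o2 = 0].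
Proof.
have := @SSP_witness_leaf_eq o0 o4 isT isT; have := @SSP_witness_leaf_eq o1 o4 isT isT.
have := @SSP_witness_leaf_eq o2 o4 isT isT; have := @SSP_witness_leaf_eq o0 o5 isT isT.
have := @SSP_witness_leaf_eq o1 o5 isT isT; have := @SSP_witness_leaf_eq o2 o5 isT isT.
rewrite !K3_star_projE /dot3 /= !X_diag0 !(SSP_witness_sym _ o0) (SSP_witness_sym o2 o1).
by move=> *; split; lra.
Qed.

Lemma SSP_witness_eq0 : X = 0.
Proof.
have [X01 X02 X12] := SSP_witness_triangle_eq0.
have X_leaf (l : 'I_n) : (4 <= l)%nat -> X o3 l = 0.
  move=> l_ge4; have := @SSP_witness_leaf_eq o0 l isT l_ge4.
  by rewrite X_diag0 X01 X02 !mul0r !addr0 K3_star_projE /dot3 /=; lra.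
have tri (k : 'I_n) : (k < 3)%nat -> k \in [:: o0; o1; o2].
  by move=> k_lt3; rewrite !inE -!(inj_eq val_inj) /=; lia.
apply/matrixP => i j; rewrite mxE.
have [|/SSP_witness_supp//] := boolP (K3_star i j).
rewrite K3_starE => /andP[_ /or3P[/andP[]|/andP[]|/andP[]]].
- move=> /tri; rewrite !inE => /or3P[] /eqP-> /tri; rewrite !inE => /or3P[] /eqP->;
  by rewrite ?X_diag0 ?X01 ?X02 ?X12 // SSP_witness_sym ?X01 ?X02 ?X12.
- by move=> /eqP i3 j_ge4; rewrite (_ : i = o3) ?X_leaf //; apply: val_inj.
- move=> /eqP j3 i_ge4; rewrite SSP_witness_sym (_ : j = o3) ?X_leaf //.
  exact: val_inj.
Qed.

End SSP.

Lemma K3_star_proj_SSP : SSP K3_star_proj.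
Proof. by move=> X; apply: SSP_witness_eq0. Qed.

End Realization.

Lemma K3_star_compl_realization m :
  exists B : 'M[R]_(m.+3.+4), [/\ S_graph (compl_graph (@K3_star _)) B,
    B *m B = B, B ord0 ord0 = 1 / 4 & SSP B].
Proof.
pose r := Num.sqrt (m.+1%:R : R); pose w := (14 * r)^-1.
have r_gt0 : 0 < r by rewrite sqrtr_gt0 ltr0n.
have w_gt0 : 0 < w by rewrite invr_gt0 mulr_gt0.
have w_norm : m.+1%:R * w ^+ 2 = 1 / 196.
  rewrite -[m.+1%:R](@sqr_sqrtr _ (m.+1%:R)) ?ler0n // -/r.
  by rewrite /w; field; rewrite gt_eqF.
exists (K3_star_proj m w); split.
- exact: K3_star_proj_S_graph.
- exact: K3_star_proj_idem.
- exact: K3_star_proj00.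
- exact: K3_star_proj_SSP.
Qed.

Theorem mainTheorem17 (n : nat) (G : rel 'I_n) :
  leq 7 n -> simple_graph G -> graph_iso G (@K3_star n) ->
  q_eq (compl_graph G) 2 /\
  exists A : 'M[R]_n,
    [/\ S_graph (compl_graph G) A, num_distinct_eig A 2 & SSP A].
Proof.
case: n G => [|[|[|[|[|[|[|m]]]]]]] G // _ _ [f Gf].
have [B [SB idemB B00 SSP_B]] := K3_star_compl_realization m.
pose A := permsim (f^-1)%g B.
have SA : S_graph (compl_graph G) A.
  apply: S_graph_permsim SB => i j.
  by rewrite /compl_graph -Gf !permKV (inj_eq perm_inj).
have eigA : num_distinct_eig A 2.
  apply: (@idempotent_num_distinct_eig _ _ (f ord0)).
  - by rewrite -permsimM idemB.
  - by rewrite mxE permK B00; apply/eqP; lra.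
  - by rewrite mxE permK B00; apply/eqP; lra.
split; [split|].
- by exists A.
- move=> A' k [symA' patA']; pose i3 := @Ordinal m.+3.+4 3 isT.
  have neq03 : f ord0 != f i3 by rewrite (inj_eq perm_inj).
  apply: (num_distinct_eig_gt1 symA' neq03); apply/(patA' _ _ neq03).
  by rewrite /compl_graph neq03 Gf.
- by exists A; split=> //; apply: SSP_permsim.
Qed.
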